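(* Let $\mathcal{H}$ be a finite family of digraphs, $D$ a digraph and $k$ an integer. A set $X\subseteq V(D)$ is a solution to the instance $(D,k)$ of $\mathcal{H}$-SCC Deletion if and only if it is a solution to the instance $(D,k)$ of the $GPC(\mathcal{H})$-Hitting problem.
   Context: Subgraphs are not necessarily induced; strong components are maximal sets of mutually reachable vertices. A solution to $(D,k)$ of $\mathcal{H}$-SCC Deletion is a set $X\subseteq V(D)$ with $|X|\le k$ such that no strong component of $D-X$ contains a subgraph isomorphic to a graph in $\mathcal{H}$. For a (possibly infinite) family $\mathcal{F}$, a solution to $(D,k)$ of $\mathcal{F}$-Hitting is a set $X\subseteq V(D)$ with $|X|\le k$ such that $D-X$ contains no subgraph isomorphic to a graph in $\mathcal{F}$. For a digraph $H$, $PC(H)$ is the set of strongly connected digraphs of the form $H\cup P_1\cup\dots\cup P_\ell$ (union of vertex and arc sets), where each $P_i$ is a directed path with both end-points in $V(H)$; $GPC(H)$ is the subset of those admitting such a representation with pairwise distinct ordered end-point pairs of the $P_i$. $GPC(\mathcal{H})=\bigcup_{H\in\mathcal{H}}GPC(H)$. *)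

From Stdlib Require List.
From mathcomp Require Import all_boot.
Set Implicit Arguments. Unset Strict Implicit. Unset Printing Implicit Defensive.

(* A (finite) digraph: a finite vertex type and an arc relation
   (no parallel arcs; loops are allowed by the type but play no special role). *)
Record digraph : Type := Digraph { dv : finType; darc : rel dv }.

(* G has a (not necessarily induced) subgraph isomorphic to H, all of whose
   vertices lie in the vertex set S of G: an injective arc-preserving map. *)
Definition embeds_in (H G : digraph) (S : {pred dv G}) : Prop :=
  exists f : dv H -> dv G,
    [/\ injective f, (forall u, f u \in S) &
        (forall u v, darc u v -> darc (f u) (f v))].

Definition del_arc (D : digraph) (X : {set dv D}) : rel (dv D) :=
  fun u v => [&& darc u v, u \notin X & v \notin X].

Definition strong_component (D : digraph) (X : {set dv D}) (C : {set dv D}) : Prop :=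
  exists2 x, x \notin X &
    C = [set y | [&& y \notin X, connect (del_arc X) x y & connect (del_arc X) y x]].

Definition strongly_connected (G : digraph) : Prop :=
  0 < #|dv G| /\ forall u v : dv G, connect (@darc G) u v.

Definition scc_solution (Hs : seq digraph) (D : digraph) (k : nat) (X : {set dv D}) : Prop :=
  #|X| <= k /\
  forall C, strong_component X C ->
    forall H, List.In H Hs -> ~ embeds_in H (mem C).

(* Solution of F-Hitting (F possibly infinite, given as a predicate on digraphs). *)
Definition hitting_solution (F : digraph -> Prop) (D : digraph) (k : nat) (X : {set dv D}) : Prop :=
  #|X| <= k /\
  forall G, F G -> ~ embeds_in G (mem (~: X)).

Definition seq_arc (T : eqType) (p : seq T) (u v : T) : Prop :=
  exists s1 s2, p = s1 ++ u :: v :: s2.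

(* G is isomorphic to H ∪ P_1 ∪ ... ∪ P_l (union of vertex and arc sets),
   where H is embedded by the injective map h, each P_i is a directed path
   given by its vertex sequence x :: q (duplicate-free) with both end-points
   x and last x q in V(H), the ordered end-point pairs are pairwise distinct,
   and G is strongly connected: G ∈ GPC(H) (up to isomorphism). *)
Definition in_GPC (H G : digraph) : Prop :=
  strongly_connected G /\
  exists (h : dv H -> dv G) (ps : seq (dv G * seq (dv G))),
    [/\ injective h,
        (forall p, p \in ps -> [/\ uniq (p.1 :: p.2), p.1 \in codom h &
                                   last p.1 p.2 \in codom h]),
        uniq [seq (p.1, last p.1 p.2) | p <- ps],
        (forall x : dv G, x \in codom h \/ exists2 p, p \in ps & x \in p.1 :: p.2) &
        (forall u v : dv G, darc u v <->
           ((exists a b, [/\ h a = u, h b = v & darc a b]) \/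
            exists2 p, p \in ps & seq_arc (p.1 :: p.2) u v))].

Definition GPC (Hs : seq digraph) (G : digraph) : Prop :=
  exists H, List.In H Hs /\ in_GPC H G.

From mathcomp Require Import all_boot.
Set Implicit Arguments. Unset Strict Implicit. Unset Printing Implicit Defensive.

(* If H embeds in a strong component C of D - X, pick for every ordered pair
   (a, b) of vertices of H a simple path of D - X from the image of a to the
   image of b inside C; the union of the image of H with these paths is a
   member of GPC(H) living in D - X.  Conversely, a member of GPC(H) in D - X
   is strongly connected, so it lies in one strong component of D - X, and so
   does the copy of H it contains. *)

Lemma seq_arc_zip (T : eqType) (s : seq T) u v :
  seq_arc s u v <-> (u, v) \in zip s (behead s).
Proof.
split.
  case=> s1 [s2 ->]; elim: s1 => [|x s1 IH] /=; first by rewrite inE eqxx.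
  by case: s1 IH => [|y s1] /= IH; rewrite inE IH orbT.
elim: s => [|x t IH] //=.
case: t IH => [|y t] IH //=; rewrite inE => /orP [/eqP [-> ->]|/IH [s1 [s2 E]]].
  by exists [::], t.
by exists (x :: s1), s2; rewrite E.
Qed.

Lemma path_zip (T : Type) (e : rel T) x s :
  path e x s = all (fun uv => e uv.1 uv.2) (zip (x :: s) s).
Proof. by elim: s x => //= y s IH x; rewrite IH. Qed.

Lemma mem_zip_inj (T1 T2 : eqType) (g : T1 -> T2) (s t : seq T1) u v :
  injective g -> ((g u, g v) \in zip (map g s) (map g t)) = ((u, v) \in zip s t).
Proof.
move=> g_inj; elim: s t => [|x s IH] [|y t] //=.
by rewrite !inE IH -!pair_eqE /= !(inj_eq g_inj).
Qed.

Lemma homo_connect (T1 T2 : finType) (e1 : rel T1) (e2 : rel T2) (g : T1 -> T2) :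
  {homo g : u v / e1 u v >-> e2 u v} ->
  {homo g : u v / connect e1 u v >-> connect e2 u v}.
Proof.
move=> ge u _ /connectP [p pp ->]; apply/connectP.
by exists (map g p); rewrite ?last_map // path_map; apply: sub_path pp.
Qed.

Lemma connect_through_path (T : finType) (e : rel T) x p u :
  path e x p -> u \in x :: p -> connect e x u /\ connect e u (last x p).
Proof.
move=> pp up; split; first exact: (path_connect pp).
case/splitPl: up pp => p1 p2 <-; rewrite cat_path last_cat => /andP [_ p2p].
by apply/connectP; exists p2.
Qed.

Lemma del_arc_notin (D : digraph) (X : {set dv D}) x p y :
  path (del_arc X) x p -> y \in p -> y \notin X.
Proof.
elim: p x => [|z p IH] x //= /andP [/and3P [_ _ zX] pp].
by rewrite inE => /orP [/eqP ->|/(IH _ pp)].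
Qed.

Lemma embeds_in_subgraph (H G D : digraph) (S : {pred dv D}) (h : dv H -> dv G) :
  injective h -> {homo h : a b / darc a b} ->
  embeds_in G S -> embeds_in H S.
Proof.
move=> h_inj h_arc [g [g_inj gS g_arc]].
exists (g \o h); split=> [a b /g_inj /h_inj // | a | a b /h_arc /g_arc //].
exact: gS.
Qed.

Lemma in_GPC_embeds_in (H G D : digraph) (S : {pred dv D}) :
  in_GPC H G -> embeds_in G S -> embeds_in H S.
Proof.
case=> _ [h [ps [h_inj _ _ _ h_arc]]]; apply: embeds_in_subgraph h_inj _.
by move=> a b ab; apply/h_arc; left; exists a, b.
Qed.

Lemma strongly_connected_in_component (G D : digraph) (X : {set dv D}) :
  strongly_connected G -> embeds_in G (mem (~: X)) ->
  exists2 C, strong_component X C & embeds_in G (mem C).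
Proof.
case=> /card_gt0P [v0 _] G_sc [g [g_inj gX g_arc]].
have g_notin u : g u \notin X by rewrite -in_setC; apply: gX.
have g_connect u v : connect (del_arc X) (g u) (g v).
  by apply: homo_connect (G_sc u v) => a b ab; rewrite /del_arc g_arc ?g_notin.
set C := [set y | [&& y \notin X, connect (del_arc X) (g v0) y & connect (del_arc X) y (g v0)]].
exists C; first by exists (g v0).
by exists g; split=> // u; rewrite inE g_notin !g_connect.
Qed.

Lemma strong_component_simple_path (D : digraph) (X C : {set dv D}) u v :
  strong_component X C -> u \in C -> v \in C ->
  exists p, [&& uniq (u :: p), path (del_arc X) u p & last u p == v].
Proof.
case=> x _ ->; rewrite !inE => /and3P [_ _ ux] /and3P [_ xv _].
case/connectP: (connect_trans ux xv) => p pp ->.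
by case: (shortenP pp) => q qp uq _; exists q; rewrite uq qp eqxx.
Qed.

Definition sub_digraph (D : digraph) (S : {set dv D}) (e : rel (dv D)) : digraph :=
  @Digraph {y : dv D | y \in S} (fun u v => e (val u) (val v)).

Lemma sub_digraph_embeds_in (D : digraph) (S : {set dv D}) (e : rel (dv D))
    (A : {pred dv D}) :
  {subset S <= A} -> subrel e (@darc D) -> embeds_in (sub_digraph S e) A.
Proof.
by move=> SA e_arc; exists val; split=> [|[y yS]|u v /e_arc]; [apply: val_inj|apply: SA|].
Qed.

Section PathUnion.

Variables (D H : digraph) (f : dv H -> dv D) (P : dv H -> dv H -> seq (dv D)).
Hypotheses (f_inj : injective f) (f_arc : {homo f : a b / darc a b}).
Hypotheses (P_uniq : forall a b, uniq (f a :: P a b))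
           (P_path : forall a b, path (@darc D) (f a) (P a b))
           (P_last : forall a b, last (f a) (P a b) = f b).

Definition union_vertices : {set dv D} :=
  [set y | (y \in codom f) || [exists ab : dv H * dv H, y \in P ab.1 ab.2]].

Definition union_arc : rel (dv D) := fun u v =>
  [exists a, exists b, [&& f a == u, f b == v & darc a b]] ||
  [exists ab : dv H * dv H, (u, v) \in zip (f ab.1 :: P ab.1 ab.2) (P ab.1 ab.2)].

Definition path_union : digraph := sub_digraph union_vertices union_arc.

Lemma union_arc_darc : subrel union_arc (@darc D).
Proof.
move=> u v /orP [/existsP [a /existsP [b /and3P [/eqP <- /eqP <- /f_arc //]]]|].
by case/existsP=> [[a b]] /= uv; move: (P_path a b); rewrite path_zip => /allP/(_ _ uv).
Qed.

Lemma union_vertices_codom a : f a \in union_vertices.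
Proof. by rewrite inE codom_f. Qed.

Definition union_hub (a : dv H) : dv path_union := exist _ (f a) (union_vertices_codom a).

Definition union_path (a b : dv H) : seq (dv path_union) := pmap insub (P a b).

Lemma union_hub_inj : injective union_hub.
Proof. by move=> a b /(congr1 val) /f_inj. Qed.

Lemma val_union_path a b : map val (union_path a b) = P a b.
Proof.
rewrite /union_path (pmap_filter (@insubK _ _ _)); apply/all_filterP/allP => y yP.
by rewrite insubT // inE; apply/orP; right; apply/existsP; exists (a, b).
Qed.

Lemma mem_union_zip a b (u v : dv path_union) :
  ((u, v) \in zip (union_hub a :: union_path a b) (union_path a b)) =
  ((val u, val v) \in zip (f a :: P a b) (P a b)).
Proof. by rewrite -(mem_zip_inj _ _ _ _ val_inj) /= val_union_path. Qed.

Lemma union_path_path a b : path (@darc path_union) (union_hub a) (union_path a b).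
Proof.
rewrite path_zip; apply/allP=> [[u v]] uv; apply/orP; right.
by apply/existsP; exists (a, b); rewrite /= -mem_union_zip.
Qed.

Lemma union_path_last a b : last (union_hub a) (union_path a b) = union_hub b.
Proof. by apply: val_inj; rewrite /= -last_map val_union_path P_last. Qed.

Lemma union_vertex_cover (u : dv path_union) :
  exists a b, u \in union_hub a :: union_path a b.
Proof.
have := valP u; rewrite inE => /orP [/codomP [a ua]|/existsP [[a b] /= ub]].
  by exists a, a; rewrite inE (_ : u = union_hub a) ?eqxx //; apply: val_inj.
by exists a, b; rewrite inE mem_pmap_sub ub orbT.
Qed.

Lemma path_union_strongly_connected : 0 < #|dv H| -> strongly_connected path_union.
Proof.
case/card_gt0P=> a0 _; split; first by apply/card_gt0P; exists (union_hub a0).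
have hub_connect a b : connect (@darc path_union) (union_hub a) (union_hub b).
  by apply/connectP; exists (union_path a b); rewrite ?union_path_path ?union_path_last.
move=> u v.
have [a [b /(connect_through_path (union_path_path a b)) [_]]] := union_vertex_cover u.
rewrite union_path_last => ub.
have [c [d /(connect_through_path (union_path_path c d)) [cv _]]] := union_vertex_cover v.
exact: connect_trans ub (connect_trans (hub_connect b c) cv).
Qed.

Definition union_paths : seq (dv path_union * seq (dv path_union)) :=
  [seq (union_hub ab.1, union_path ab.1 ab.2) | ab <- enum {: dv H * dv H}].

Lemma mem_union_paths a b : (union_hub a, union_path a b) \in union_paths.
Proof. by apply/mapP; exists (a, b); rewrite ?mem_enum. Qed.

Lemma path_union_arcP (u v : dv path_union) :
  darc u v <->
  (exists a b, [/\ union_hub a = u, union_hub b = v & darc a b]) \/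
  exists2 p, p \in union_paths & seq_arc (p.1 :: p.2) u v.
Proof.
split.
  case/orP=> [/existsP [a /existsP [b /and3P [/eqP ua /eqP vb ab]]]|/existsP [[a b] /= uv]].
    by left; exists a, b; split=> //; apply: val_inj.
  right; exists (union_hub a, union_path a b); first exact: mem_union_paths.
  by apply/seq_arc_zip; rewrite /= mem_union_zip.
case=> [[a [b [<- <- ab]]]|[_ /mapP [[a b] _ ->] /= /seq_arc_zip uv]].
  by apply/orP; left; apply/existsP; exists a; apply/existsP; exists b; rewrite !eqxx.
by apply/orP; right; apply/existsP; exists (a, b); rewrite /= -mem_union_zip.
Qed.

Lemma path_union_GPC : 0 < #|dv H| -> in_GPC H path_union.
Proof.
move=> H_gt0; split; first exact: path_union_strongly_connected.
exists union_hub, union_paths; split.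
- exact: union_hub_inj.
- move=> _ /mapP [[a b] _ ->] /=; rewrite union_path_last !codom_f; split=> //.
  have := P_uniq a b; rewrite -val_union_path -(map_cons val (union_hub a)).
  by rewrite (map_inj_uniq val_inj).
- rewrite -map_comp (map_inj_uniq _) ?enum_uniq // => -[a1 a2] [b1 b2] /=.
  by rewrite !union_path_last => -[] /f_inj -> /f_inj ->.
- move=> u; right; have [a [b ub]] := union_vertex_cover u.
  by exists (union_hub a, union_path a b); first exact: mem_union_paths.
- exact: path_union_arcP.
Qed.

End PathUnion.

Theorem lemma20 (Hs : seq digraph)
    (Hs_nonempty : forall H, List.In H Hs -> 0 < #|dv H|)
    (D : digraph) (k : nat) (X : {set dv D}) :
  scc_solution Hs k X <-> hitting_solution (GPC Hs) k X.
Proof.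
split=> [[Xk X_scc] | [Xk X_hit]]; split=> //.
  move=> G [H [HHs G_GPC]] /(strongly_connected_in_component (proj1 G_GPC)) [C XC GC].
  exact: X_scc XC H HHs (in_GPC_embeds_in G_GPC GC).
move=> C XC H HHs [f [f_inj fC f_arc]].
have C_notin y : y \in C -> y \notin X.
  by case: XC => x _ ->; rewrite inE => /and3P [].
have P_ex a b := strong_component_simple_path XC (fC a) (fC b).
pose P a b := xchoose (P_ex a b).
have P_uniq a b : uniq (f a :: P a b) by case/and3P: (xchooseP (P_ex a b)).
have P_del a b : path (del_arc X) (f a) (P a b) by case/and3P: (xchooseP (P_ex a b)).
have P_last a b : last (f a) (P a b) = f b by case/and3P: (xchooseP (P_ex a b)) => _ _ /eqP.
have P_path a b : path (@darc D) (f a) (P a b) by apply: sub_path (P_del a b) => u v /andP [].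
apply: (X_hit (path_union f P)).
  by exists H; split=> //; apply: path_union_GPC; rewrite ?Hs_nonempty.
apply: sub_digraph_embeds_in (union_arc_darc f_arc P_path) => y.
rewrite inE in_setC => /orP [/codomP [a ->] | /existsP [[a b] /= /(del_arc_notin (P_del a b))]] //.
exact/C_notin/fC.
Qed.
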